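(* Let $G=(V,E)$ be a finite trivalent graph (for example, a honeycomb lattice with periodic boundary conditions), with a fixed orientation chosen on each edge, and let $L$ be a finite set of string labels with an involution $i\mapsto i^*$. The Hilbert space is $\bigotimes_{e\in E}\mathbb{C}^{L}$, with orthonormal basis $\{|s\rangle\}$ indexed by configurations $s:E\to L$. Let $\mathcal{B}\subseteq L^3$ be a set of allowed triples (branching rules), and call a configuration $s$ valid if at every vertex $v$ the triple of labels on the three edges incident to $v$ (each label replaced by its dual if the corresponding edge is oriented away from $v$) belongs to $\mathcal{B}$; let $S$ be the set of valid configurations. Assume the string-net is Abelian in the sense that the branching rules have no multiplicity: at every vertex, once the (appropriately dualized) labels on two of the three incident edges are fixed, there is at most one label on the third edge making the triple allowed. Let $|\Phi\rangle=\sum_{s\in S}a(s)|s\rangle$ be the string-net ground state (a normalized state supported only on valid configurations). Let $A\subseteq E$ be a non-empty set of edges that is non-loopy, i.e. the subgraph of $G$ formed by the edges of $A$ contains no cycle, and suppose $B=E\setminus A$ is its complement. Then the reduced density matrix $\rho_A=\mathrm{Tr}_B|\Phi\rangle\langle\Phi|$ is fully separable (with respect to the partition of $A$ into its individual edges), i.e. $\rho_A$ contains no entanglement whatsoever.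
   Context: Matrix elements of the reduced state are $[\rho_A]_{s_A,s_A'}=\sum_{s_B}a(s_A s_B)\,a^*(s_A' s_B)$, where the sum is over configurations $s_B$ of the edges in $B$ with both $(s_A,s_B)\in S$ and $(s_A',s_B)\in S$. A density matrix on $\bigotimes_{e\in A}\mathcal{H}_e$ is fully separable if it is a convex combination of product states $\bigotimes_{e\in A}|\psi_e\rangle\langle\psi_e|$. In the Levin–Wen string-net construction, the fixed-point ground state is determined by tensors $F^{ijm}_{kln}$ and $d_i$ and is supported exactly on configurations satisfying the branching rules at every vertex; only this support property is relevant here. *)

From HB Require Import structures.
From mathcomp Require Import all_boot all_order all_algebra.
Set Implicit Arguments. Unset Strict Implicit. Unset Printing Implicit Defensive.
Import Order.TTheory GRing.Theory Num.Theory.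

Section Graph.
Variables (V E : finType) (src tgt : E -> V).

Definition incident (v : V) (e : E) : bool := (src e == v) || (tgt e == v).

Definition links (e : E) (u w : V) : bool :=
  ((src e == u) && (tgt e == w)) || ((src e == w) && (tgt e == u)).

(* finite trivalent graph (no self-loops; multi-edges allowed) *)
Definition trivalent (nb : V -> 'I_3 -> E) : Prop :=
  [/\ forall e, src e != tgt e,
      forall v, injective (nb v) &
      forall v e, incident v e <-> exists i, nb v i = e].

Definition has_cycle (A : {set E}) : Prop :=
  exists (es : seq E) (vs : seq V),
    [/\ (0 < size es)%N, size vs = size es, uniq es && uniq vs,
        all (fun e => e \in A) es &
        forall (e0 : E) (v0 : V) (i : nat), (i < size es)%N ->
          links (nth e0 es i) (nth v0 vs i) (nth v0 vs ((i.+1) %% size es))].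

Definition non_loopy (A : {set E}) : Prop := ~ has_cycle A.

Variables (L : finType) (dual : L -> L).

Definition vlabel (s : {ffun E -> L}) (v : V) (e : E) : L :=
  if tgt e == v then s e else dual (s e).

Definition i0 : 'I_3 := @Ordinal 3 0 isT.
Definition i1 : 'I_3 := @Ordinal 3 1 isT.
Definition i2 : 'I_3 := @Ordinal 3 2 isT.

Definition valid (nb : V -> 'I_3 -> E) (Br : {set L * L * L})
    (s : {ffun E -> L}) : bool :=
  [forall v, (vlabel s v (nb v i0), vlabel s v (nb v i1), vlabel s v (nb v i2))
               \in Br].

End Graph.

Definition abelian_rules (L : finType) (Br : {set L * L * L}) : Prop :=
  forall x1 x2 x3 y1 y2 y3, (x1, x2, x3) \in Br -> (y1, y2, y3) \in Br ->
    [/\ x1 = y1 -> x2 = y2 -> x3 = y3,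
        x1 = y1 -> x3 = y3 -> x2 = y2 &
        x2 = y2 -> x3 = y3 -> x1 = y1].

Local Open Scope ring_scope.

Section Density.
Variables (E L : finType) (C : numClosedFieldType).

Definition cfgA (A : {set E}) := {ffun {e : E | e \in A} -> L}.
Definition cfgB (A : {set E}) := {ffun {e : E | e \notin A} -> L}.

Definition glue (A : {set E}) (sA : cfgA A) (sB : cfgB A) : {ffun E -> L} :=
  [ffun e => (if e \in A as b return (e \in A) = b -> L
              then fun h => sA (exist _ e h)
              else fun h => sB (exist _ e (negbT h))) erefl].

(* rho_A = Tr_B |Phi><Phi|, with |Phi> = sum_s a(s) |s> *)
Definition rhoA (a : {ffun E -> L} -> C) (A : {set E}) (sA sA' : cfgA A) : C :=
  \sum_(sB : cfgB A) a (glue sA sB) * (a (glue sA' sB))^*.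

(* full separability w.r.t. the tensor factors indexed by I:
   a finite convex combination of product states of normalized pure states *)
Definition fully_separable (I : finType)
    (rho : {ffun I -> L} -> {ffun I -> L} -> C) : Prop :=
  exists (n : nat) (p : 'I_n -> C) (psi : 'I_n -> I -> L -> C),
    [/\ forall k, 0 <= p k,
        \sum_k p k = 1,
        forall k i, \sum_l `|psi k i l| ^+ 2 = 1 &
        forall x y, rho x y =
          \sum_k p k * \prod_i (psi k i (x i) * (psi k i (y i))^*)].

End Density.
Arguments rhoA {E L C} a A sA sA'.
Arguments fully_separable {L C I} rho.

From HB Require Import structures.
From mathcomp Require Import all_boot all_order all_algebra zify.
Import Order.TTheory GRing.Theory Num.Theory.
Set Implicit Arguments.
Unset Strict Implicit.
Unset Printing Implicit Defensive.

(* Let s, s' be valid configurations that agree outside A, and let D be the set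
   of edges where they differ. No vertex is incident to exactly one edge of D:
   the branching rule at that vertex would determine the label on that edge
   from the two others, on which s and s' agree. A nonempty edge set without
   such leaves contains a cycle (follow a longest path), yet D is contained in
   the acyclic set A, so s = s'. Hence for every s_B at most one s_A makes
   (s_A s_B) valid, rho_A is diagonal in the product basis, and a diagonal
   density matrix is a mixture of product basis states. *)

Section Cycles.
Variables (V E : finType) (src tgt : E -> V).

Lemma links_incident e u w : links src tgt e u w -> incident src tgt u e.
Proof.
by rewrite /incident; case/orP=> /andP[/eqP-> /eqP->]; rewrite eqxx ?orbT.
Qed.

Lemma incident_links e u w v :
  links src tgt e u w -> incident src tgt v e -> (v == u) || (v == w).
Proof.
rewrite /incident; case/orP=> /andP[/eqP<- /eqP<-] /orP[]/eqP->;
  by rewrite eqxx ?orbT.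
Qed.

Definition other_end (e : E) (v : V) : V := if src e == v then tgt e else src e.

Lemma links_other_end e v :
  incident src tgt v e -> links src tgt e (other_end e v) v.
Proof.
rewrite /other_end /links /incident.
by case: eqP => [->|_ /eqP->] /=; rewrite !eqxx ?orbT.
Qed.

Lemma has_cycle_subset (A B : {set E}) :
  A \subset B -> has_cycle src tgt A -> has_cycle src tgt B.
Proof.
move=> sAB [es [vs [es_gt0 size_vs uniq_esvs esA links_es]]].
exists es, vs; split=> //; apply/allP=> e /(allP esA); exact: (subsetP sAB).
Qed.

Hypothesis no_self_loop : forall e, src e != tgt e.
Variable D : {set E}.
Hypothesis no_leaf : forall v e, e \in D -> incident src tgt v e ->
  exists2 e', e' \in D & (e' != e) && incident src tgt v e'.

Definition D_path (es : seq E) (vs : seq V) : Prop :=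
  [/\ size vs = (size es).+1, uniq es, uniq vs, {subset es <= D} &
      forall e0 v0 i, (i < size es)%N ->
        links src tgt (nth e0 es i) (nth v0 vs i) (nth v0 vs i.+1)].

Lemma D_path_cycle es v0 vs e w :
  D_path es (v0 :: vs) -> e \in D -> e \notin es -> w \in v0 :: vs ->
  links src tgt e w v0 -> has_cycle src tgt D.
Proof.
move=> [size_vs uniq_es uniq_vs esD links_es] eD e_es w_vs ewv0.
set j := index w (v0 :: vs).
have j_vs : (j < size (v0 :: vs))%N by rewrite index_mem.
have j_es : (j <= size es)%N by rewrite -ltnS -size_vs.
exists (rcons (take j es) e), (take j.+1 (v0 :: vs)).
rewrite size_rcons (size_takel j_es) (size_takel j_vs); split=> //.
- rewrite rcons_uniq !take_uniq // !andbT.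
  by apply: contra _ e_es; apply: mem_take.
- by apply/allP=> x; rewrite mem_rcons inE => /orP[/eqP->|/mem_take/esD].
move=> e1 v1 i; rewrite ltnS leq_eqVlt => /orP[/eqP->|ij].
  rewrite modnn nth_rcons (size_takel j_es) ltnn eqxx nth_take //=.
  by rewrite (set_nth_default v0) // nth_index.
rewrite modn_small // nth_rcons (size_takel j_es) ij.
rewrite !nth_take ?ltnS ?(ltnW ij) //.
exact/links_es/(leq_trans ij).
Qed.

Lemma D_path_head_edge e0 es v0 vs e :
  D_path (e0 :: es) (v0 :: vs) -> incident src tgt v0 e -> e \in e0 :: es ->
  e = e0.
Proof.
move=> [/= [size_vs] _ /andP[v0_vs _] _ links_es] v0e /(nthP e0) [[|i] i_es ei].
  by rewrite -ei.
rewrite -ei ltnS in v0e i_es; exfalso; move/negP: v0_vs; apply.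
case/orP: (incident_links (links_es e0 v0 i.+1 i_es) v0e) => /eqP->;
  by apply: mem_nth; rewrite size_vs ltnS //; apply: ltnW.
Qed.

Lemma D_path_grow e0 es v0 vs :
  D_path (e0 :: es) (v0 :: vs) ->
  has_cycle src tgt D \/ exists e w, D_path (e :: e0 :: es) (w :: v0 :: vs).
Proof.
move=> P; have [size_vs uniq_es uniq_vs esD links_es] := P.
have e0D : e0 \in D by apply: esD; rewrite mem_head.
have v0e0 := links_incident (links_es e0 v0 0 isT).
have [e eD /andP[ee0 v0e]] := no_leaf e0D v0e0.
have e_es : e \notin e0 :: es.
  by apply/negP=> /(D_path_head_edge P v0e) /eqP; apply/negP.
have ewv0 := links_other_end v0e; set w := other_end e v0 in ewv0.
have [w_vs|w_vs] := boolP (w \in v0 :: vs).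
  by left; apply: D_path_cycle P eD e_es w_vs ewv0.
right; exists e, w; split.
- by move: size_vs => /= ->.
- by rewrite cons_uniq e_es.
- by rewrite cons_uniq w_vs.
- by move=> x; rewrite inE => /orP[/eqP->|/esD].
by move=> e1 v1 [|i] //; apply: links_es.
Qed.

Lemma has_cycle_of_no_leaf : D != set0 -> has_cycle src tgt D.
Proof.
case/set0Pn=> e eD.
suff grow n e0 es v0 vs : (#|V| - size vs < n)%N ->
    D_path (e0 :: es) (v0 :: vs) -> has_cycle src tgt D.
  apply: (grow _ e [::] (src e) [:: tgt e] (ltnSn _)).
  split=> //=; rewrite ?inE ?(negbTE (no_self_loop e)) //.
    by move=> x; rewrite inE => /eqP->.
  by move=> e1 v1 [|i] //= _; rewrite /links !eqxx.
elim: n e0 es v0 vs => [//|n IH] e0 es v0 vs size_lt P.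
case: (D_path_grow P) => [//|[e' [w P']]].
have [_ _ /card_uniqP card_wvs _ _] := P'.
apply: IH P'; have := max_card (mem (w :: v0 :: vs)).
rewrite card_wvs /= in size_lt *; lia.
Qed.

End Cycles.

Lemma vlabel_eq (V E L : finType) (tgt : E -> V) (dual : L -> L)
    (s s' : {ffun E -> L}) v e :
  injective dual ->
  (vlabel tgt dual s v e == vlabel tgt dual s' v e) = (s e == s' e).
Proof.
by move=> dual_inj; rewrite /vlabel; case: ifP => // _; apply: inj_eq.
Qed.

Lemma abelian_rules_determined (L : finType) (Br : {set L * L * L})
    (x y : 'I_3 -> L) i :
  abelian_rules Br -> (x i0, x i1, x i2) \in Br -> (y i0, y i1, y i2) \in Br ->
  (forall k, k != i -> x k = y k) -> x i = y i.
Proof.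
move=> abelian xBr yBr xy; have [det3 det2 det1] := abelian _ _ _ _ _ _ xBr yBr.
case: i xy => -[|[|[|//]]] lt_i3 xy; rewrite (bool_irrelevance lt_i3 isT).
- by apply: det1; apply: xy.
- by apply: det2; apply: xy.
- by apply: det3; apply: xy.
Qed.

Section ValidConfigurations.
Variables (V E L : finType) (src tgt : E -> V) (nb : V -> 'I_3 -> E).
Variables (dual : L -> L) (Br : {set L * L * L}).
Hypotheses (nb_trivalent : trivalent src tgt nb) (dual_inj : injective dual).
Hypothesis abelian : abelian_rules Br.
Variables s s' : {ffun E -> L}.
Hypothesis s_valid : valid tgt dual nb Br s.
Hypothesis s'_valid : valid tgt dual nb Br s'.

Let diff := [set e | s e != s' e].

Lemma disagreement_no_leaf v e : e \in diff -> incident src tgt v e ->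
  exists2 e', e' \in diff & (e' != e) && incident src tgt v e'.
Proof.
have [_ nb_inj nbP] := nb_trivalent.
move=> e_diff /nbP[i nb_i]; subst e.
have [k /andP[ki k_diff]|agree] :=
  pickP (fun k => (k != i) && (nb v k \in diff)).
  by exists (nb v k); rewrite // (inj_eq (nb_inj v)) ki; apply/nbP; exists k.
move: e_diff; rewrite inE -(vlabel_eq tgt s s' v _ dual_inj).
move=> /eqP[].
apply: (abelian_rules_determined (x := fun k => vlabel tgt dual s v (nb v k))
  (y := fun k => vlabel tgt dual s' v (nb v k)) abelian).
- exact: (forallP s_valid v).
- exact: (forallP s'_valid v).
move=> k ki; apply/eqP; rewrite vlabel_eq //.
by move: (agree k); rewrite ki /diff inE => /negbFE.
Qed.

Lemma valid_eq_of_acyclic (A : {set E}) :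
  non_loopy src tgt A -> (forall e, e \notin A -> s e = s' e) -> s = s'.
Proof.
have [no_self_loop _ _] := nb_trivalent.
move=> A_acyclic agree_out; have diff0 : diff = set0.
  apply/eqP; apply: contraT => /(has_cycle_of_no_leaf no_self_loop
    disagreement_no_leaf) diff_cycle.
  case: A_acyclic; apply: has_cycle_subset diff_cycle.
  by apply/subsetP=> e; rewrite inE; apply: contraR => /agree_out->.
apply/ffunP=> e; apply/eqP; apply: contraT => ne.
by have := in_set0 e; rewrite -diff0 inE ne.
Qed.

End ValidConfigurations.

Local Open Scope ring_scope.

Section Glue.
Variables (E L : finType) (A : {set E}).

Lemma glue_in (sA : cfgA L A) (sB : cfgB L A) e (eA : e \in A) :
  glue sA sB e = sA (exist _ e eA).
Proof.
rewrite ffunE; move: (erefl (e \in A)); rewrite {2 3}eA => eA'.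
by rewrite (bool_irrelevance eA' eA).
Qed.

Lemma glue_notin (sA : cfgA L A) (sB : cfgB L A) e (eNA : e \notin A) :
  glue sA sB e = sB (exist _ e eNA).
Proof.
rewrite ffunE; move: (erefl (e \in A)); rewrite {2 3}(negbTE eNA) => eA.
by rewrite (bool_irrelevance (negbT eA) eNA).
Qed.

Lemma glue_inj_in (sA sA' : cfgA L A) (sB : cfgB L A) :
  glue sA sB = glue sA' sB -> sA = sA'.
Proof.
by move=> glue_eq; apply/ffunP=> -[e eA]; rewrite -!(glue_in _ sB) glue_eq.
Qed.

Lemma glue_eq_notin (sA sA' : cfgA L A) (sB : cfgB L A) e :
  e \notin A -> glue sA sB e = glue sA' sB e.
Proof. by move=> eNA; rewrite !(glue_notin _ _ eNA). Qed.

Lemma glue_bij : bijective (fun p : cfgA L A * cfgB L A => glue p.1 p.2).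
Proof.
exists (fun s : {ffun E -> L} =>
  ([ffun x => s (val x)], [ffun y => s (val y)]) : cfgA L A * cfgB L A).
  move=> [sA sB] /=; congr (_, _); apply/ffunP=> -[e eA]; rewrite ffunE /=.
    exact: glue_in.
  exact: glue_notin.
move=> s; apply/ffunP=> e /=.
have [eA|eNA] := boolP (e \in A).
  by rewrite (glue_in _ _ eA) ffunE.
by rewrite (glue_notin _ _ eNA) ffunE.
Qed.

End Glue.

Section ReducedState.
Variables (E L : finType) (C : numClosedFieldType).
Variables (a : {ffun E -> L} -> C) (A : {set E}).

Lemma rhoA_diag_ge0 x : 0 <= rhoA a A x x.
Proof. by apply: sumr_ge0 => sB _; apply: mul_conjC_ge0. Qed.

Lemma sum_rhoA_diag : \sum_x rhoA a A x x = \sum_s `|a s| ^+ 2.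
Proof.
rewrite (reindex _ (onW_bij _ (@glue_bij E L A))) /= /rhoA pair_bigA.
by apply: eq_bigr => p _; rewrite normCK.
Qed.

Lemma rhoA_offdiag :
  (forall s s', a s != 0 -> a s' != 0 ->
     (forall e, e \notin A -> s e = s' e) -> s = s') ->
  forall x y, x != y -> rhoA a A x y = 0.
Proof.
move=> support_det x y xy; apply: big1 => sB _.
have [->|ax] := eqVneq (a (glue x sB)) 0; first by rewrite mul0r.
have [->|ay] := eqVneq (a (glue y sB)) 0; first by rewrite conjC0 mulr0.
case/eqP: xy; apply: (glue_inj_in (sB := sB)); apply: support_det ax ay _.
exact: glue_eq_notin.
Qed.

End ReducedState.

Section Separability.
Variables (I L : finType) (C : numClosedFieldType).

Lemma prod_indicator_ffun (x z : {ffun I -> L}) :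
  \prod_i ((x i == z i)%:R : C) = (x == z)%:R.
Proof.
have [->|xz] := eqVneq x z; first by rewrite big1 // => i _; rewrite eqxx.
have [i xzi] : exists i, x i != z i.
  apply/existsP; rewrite -negb_forall; apply: contra xz => /forallP xz.
  by apply/eqP/ffunP => i; apply/eqP.
by rewrite (bigD1 i) //= (negbTE xzi) mul0r.
Qed.

Lemma diagonal_fully_separable (rho : {ffun I -> L} -> {ffun I -> L} -> C) :
  (forall x y, x != y -> rho x y = 0) -> (forall x, 0 <= rho x x) ->
  \sum_x rho x x = 1 -> fully_separable rho.
Proof.
move=> rho_diag rho_ge0 rho_tr.
have z_bij := @enum_val_bij {ffun I -> L}; set z := enum_val in z_bij.
have z_reindex := reindex _ (onW_bij _ z_bij).
exists #|{ffun I -> L}|, (fun k => rho (z k) (z k)),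
  (fun k i l => (l == z k i)%:R); split=> //.
- by rewrite -rho_tr [RHS]z_reindex.
- move=> k i; rewrite (bigD1 (z k i)) //= eqxx normr1 expr1n big1 ?addr0 //.
  by move=> l /negbTE->; rewrite normr0 expr0n.
move=> x y; transitivity (\sum_w rho w w * ((x == w) && (y == w))%:R).
  rewrite (bigD1 x) //= eqxx big1 ?addr0; last first.
    by move=> w /negbTE wx; rewrite eq_sym wx mulr0.
  by have [->|yx] := eqVneq y x; rewrite ?mulr1 // mulr0 rho_diag // eq_sym.
rewrite [LHS]z_reindex; apply: eq_bigr => k _; rewrite big_split /=.
under [X in _ = _ * (_ * X)]eq_bigr do rewrite conjC_nat.
by rewrite !prod_indicator_ffun -natrM mulnb.
Qed.

End Separability.

Theorem mainTheorem1 (V E L : finType) (src tgt : E -> V) (nb : V -> 'I_3 -> E)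
    (dual : L -> L) (Br : {set L * L * L}) (C : numClosedFieldType)
    (a : {ffun E -> L} -> C) (A : {set E}) :
  trivalent src tgt nb ->
  involutive dual ->
  abelian_rules Br ->
  (forall s, ~~ valid tgt dual nb Br s -> a s = 0) ->
  \sum_s `|a s| ^+ 2 = 1 ->
  A != set0 ->
  non_loopy src tgt A ->
  fully_separable (rhoA a A).
Proof.
move=> nb_trivalent dual_inv abelian a_support a_norm _ A_acyclic.
have valid_of_nonzero s : a s != 0 -> valid tgt dual nb Br s.
  by move=> as0; apply: contraNT as0 => /a_support/eqP.
apply: diagonal_fully_separable.
- apply: rhoA_offdiag => s s' /valid_of_nonzero s_valid.
  move=> /valid_of_nonzero s'_valid.
  exact: (valid_eq_of_acyclic nb_trivalent (inv_inj dual_inv) abelian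
            s_valid s'_valid A_acyclic).
- exact: rhoA_diag_ge0.
- by rewrite sum_rhoA_diag.
Qed.
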